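(* Let $H$ be a finite set, $S\subseteq\wp(H)$, $\mathcal{G}\subseteq S$, and fix $\alpha\in(0,1/2)$. Take $\kappa=\nu$, the classical rough inclusion function. Then there exist a set of integers $K\subseteq\{-1,0,1,2,\dots\}$ and a partition $\{S_i\}_{i\in K}$ of $S$ into nonempty blocks such that for every $i\in K$ and every $x\in S_i$, $x^{u_{\alpha^*}}=x^{u_i}$.
   Context: $\nu(A,B)=\#(A\cap B)/\#(A)$ if $A\neq\emptyset$ and $\nu(A,B)=1$ if $A=\emptyset$. For $x\in S$: $x^{u_{\alpha^*}}=\bigcup\{h\in\mathcal{G}:\nu(x,h)>\alpha\}$, and for an integer $k\ge -1$ the $k$-graded upper approximation is $x^{u_k}=\bigcup\{h\in\mathcal{G}:\#(h\cap x)>k\}$ (empty union $=\emptyset$). *)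

From mathcomp Require Import all_boot all_order all_algebra.
From mathcomp Require Import reals.
Set Implicit Arguments. Unset Strict Implicit. Unset Printing Implicit Defensive.
Import Order.TTheory GRing.Theory Num.Theory.
Local Open Scope ring_scope.

Definition nu {R : realType} (H : finType) (A B : {set H}) : R :=
  if A == set0 then 1 else #|A :&: B|%:R / #|A|%:R.

Definition upper_alpha {R : realType} (H : finType) (G : {set {set H}})
    (alpha : R) (x : {set H}) : {set H} :=
  \bigcup_(h in G | alpha < nu x h) h.

Definition upper_k (H : finType) (G : {set {set H}}) (k : int) (x : {set H})
    : {set H} :=
  \bigcup_(h in G | k < (#|h :&: x|)%:Z) h.

From mathcomp Require Import all_boot all_order all_algebra.
From mathcomp Require Import reals.
Import Order.TTheory GRing.Theory Num.Theory.
Local Open Scope ring_scope.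

(* For nonempty x, nu(x,h) > alpha iff #(h ∩ x) > alpha #x iff #(h ∩ x) > floor(alpha #x);
   for x empty, nu(x,h) = 1 > alpha always and #(h ∩ x) = 0 > -1.  So x^{u_alpha*} is the
   graded approximation x^{u_k} with k = nu_threshold alpha x, and S is partitioned into the
   nonempty fibres of this threshold. *)

Definition nu_threshold {R : realType} {H : finType} (alpha : R) (x : {set H}) : int :=
  if x == set0 then -1 else Num.floor (alpha * #|x|%:R).

Section Threshold.

Variables (R : realType) (H : finType) (alpha : R).

Lemma nu_threshold_ge_m1 (x : {set H}) : 0 <= alpha -> -1 <= nu_threshold alpha x.
Proof.
move=> a_ge0; rewrite /nu_threshold; case: eqP => // _.
by apply: (@le_trans _ _ 0) => //; rewrite floor_ge0 mulr_ge0.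
Qed.

Lemma ltr_nu_threshold (x h : {set H}) : alpha < 1 ->
  (alpha < nu x h) = (nu_threshold alpha x < #|h :&: x|%:Z).
Proof.
move=> a_lt1; rewrite /nu /nu_threshold; case: eqP => [->|/eqP x_neq0].
  by rewrite setI0 cards0 a_lt1.
have x_gt0 : 0 < #|x|%:R :> R by rewrite ltr0n card_gt0.
by rewrite ltr_pdivlMr // floor_lt_int setIC -pmulrn.
Qed.

Lemma upper_alpha_threshold (G : {set {set H}}) (x : {set H}) : alpha < 1 ->
  upper_alpha G alpha x = upper_k G (nu_threshold alpha x) x.
Proof. by move=> a_lt1; apply: eq_bigl => h; rewrite ltr_nu_threshold. Qed.

End Threshold.

Section Fibres.

Variables (T : finType) (I : eqType) (f : T -> I) (S : {set T}).

Definition fibre (i : I) : {set T} := [set x in S | f x == i].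

Lemma fibre_disjoint (i j : I) : i <> j -> [disjoint fibre i & fibre j].
Proof.
move=> i_neq_j; rewrite -setI_eq0; apply/eqP/setP => x; rewrite !inE.
apply/negP => /andP[/andP[_ /eqP fx_i] /andP[_ /eqP fx_j]].
by apply: i_neq_j; rewrite -fx_i -fx_j.
Qed.

Lemma mem_fibre (x : T) : (x \in S) = (x \in fibre (f x)).
Proof. by rewrite inE eqxx andbT. Qed.

Lemma fibre_cover (x : T) : x \in S <-> exists2 i, fibre i != set0 & x \in fibre i.
Proof.
split=> [xS | [i _]]; last by rewrite inE => /andP[].
by exists (f x); [apply/set0Pn; exists x |]; rewrite -mem_fibre.
Qed.

End Fibres.

Arguments fibre {T I} f S i.

Theorem mainTheorem10 (R : realType) (H : finType) (S G : {set {set H}})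
    (alpha : R) :
  G \subset S -> 0 < alpha -> alpha < 2^-1 ->
  exists (K : int -> Prop) (Sfam : int -> {set {set H}}),
    [/\ (forall i, K i -> -1 <= i),
        (forall i, K i -> Sfam i != set0),
        (forall i j, K i -> K j -> i <> j -> [disjoint Sfam i & Sfam j]),
        (forall x, x \in S <-> exists2 i, K i & x \in Sfam i)
      & (forall i x, K i -> x \in Sfam i -> upper_alpha G alpha x = upper_k G i x)].
Proof.
move=> _ a_gt0 a_lt_half.
have a_lt1 : alpha < 1 by apply: lt_trans a_lt_half _; rewrite invf_lt1 // ltr1n.
pose Sfam := fibre (nu_threshold alpha) S.
exists (fun i => Sfam i != set0), Sfam; split=> //.
- by move=> i /set0Pn[x]; rewrite inE => /andP[_ /eqP <-]; apply/nu_threshold_ge_m1/ltW.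
- by move=> i j _ _; apply: fibre_disjoint.
- exact: fibre_cover.
- by move=> i x _; rewrite inE => /andP[_ /eqP <-]; apply: upper_alpha_threshold.
Qed.
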